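(* Let $n$ be an even positive integer. The deterministic query complexity of the partial function $\mathrm{1v2Cycle}$ on $n$ vertices satisfies $D(\mathrm{1v2Cycle})\ge\frac{n^2}{512}$.
   Context: Undirected graphs on vertex set $\{1,\dots,n\}$ are encoded as strings in $\{0,1\}^N$ with $N=\binom n2$, one bit per unordered pair indicating presence of the edge. The partial function $\mathrm{1v2Cycle}:\Delta\to\{0,1\}$ is defined on the set $\Delta$ of graphs that are either a single cycle of length $n$ or a disjoint union of two cycles each of length $n/2$; it equals $1$ on the former and $0$ on the latter. For a partial function $g:\Delta\to\{0,1\}$, $D(g)=\min\{D(f): f:\{0,1\}^N\to\{0,1\},\ f|_\Delta=g\}$, where $D(f)$ for total $f$ is the minimum depth of a deterministic decision tree computing $f$. *)

From mathcomp Require Import all_boot.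
Set Implicit Arguments. Unset Strict Implicit. Unset Printing Implicit Defensive.

(* Unordered pairs {u,v} of vertices of {0..n-1}, represented as (u,v) with u < v.
   #|edge_idx n| = 'C(n,2) = N : these index the N input bits. *)
Definition edge_idx (n : nat) := {p : 'I_n * 'I_n | p.1 < p.2}.

Definition graph (n : nat) := {ffun edge_idx n -> bool}.

Definition gadj (n : nat) (x : graph n) (u v : 'I_n) : bool :=
  [exists e : edge_idx n, ((val e == (u, v)) || (val e == (v, u))) && x e].

Definition cyc_adj (n : nat) (s : seq 'I_n) (u v : 'I_n) : bool :=
  [&& u != v, u \in s, v \in s & (v == next s u) || (u == next s v)].

Definition one_cycle (n : nat) (x : graph n) : Prop :=
  exists s : seq 'I_n, [/\ uniq s, size s = n &
    forall u v, u != v -> gadj x u v = cyc_adj s u v].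

Definition two_cycles (n : nat) (x : graph n) : Prop :=
  exists s1 s2 : seq 'I_n, [/\ uniq (s1 ++ s2), size s1 = n./2, size s2 = n./2 &
    forall u v, u != v -> gadj x u v = cyc_adj s1 u v || cyc_adj s2 u v].

Inductive dtree (I : Type) : Type :=
  | Leaf of bool
  | Node of I & dtree I & dtree I.

Fixpoint dt_eval (I : Type) (t : dtree I) (x : I -> bool) : bool :=
  match t with
  | Leaf b => b
  | Node i t0 t1 => if x i then dt_eval t1 x else dt_eval t0 x
  end.

Fixpoint dt_depth (I : Type) (t : dtree I) : nat :=
  match t with
  | Leaf _ => 0
  | Node _ t0 t1 => (maxn (dt_depth t0) (dt_depth t1)).+1
  end.

Definition computes (n : nat) (t : dtree (edge_idx n)) (f : graph n -> bool) : Prop :=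
  forall x : graph n, dt_eval t x = f x.

(* f : {0,1}^N -> {0,1} extends the partial function 1v2Cycle (defined on Delta) *)
Definition extends_1v2Cycle (n : nat) (f : graph n -> bool) : Prop :=
  (forall x, one_cycle x -> f x = true) /\ (forall x, two_cycles x -> f x = false).

From mathcomp Require Import all_boot zify.
Set Implicit Arguments. Unset Strict Implicit. Unset Printing Implicit Defensive.

(* The adversary keeps a family of vertex-disjoint paths covering all vertices, whose
   edges are the queries it has answered 1, and a graph A of the edges answered 0.  A
   query joining endpoints of two different paths is answered 1, merging the two paths,
   when one of its ends is heavy, i.e. already has T = n/16 absent edges; every other
   query is answered 0.  So an endpoint has at most T absent edges to endpoints of other
   paths, and every merge adds a path edge at a heavy vertex.  After q queries there are
   at most 2q/T heavy vertices, each of path degree at most 2, hence at most 4q/T merges,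
   roughly n/8 when 512 q < n^2.  The paths, mostly single vertices, then split into two
   halves of n/2 vertices, each made of at least 4(T+1)+2 paths, and such a family of
   paths can be chained greedily into a cycle avoiding A, because each path can follow,
   and be followed by, all but at most T+1 of the others.  This yields a
   Hamiltonian cycle and two cycles of length n/2 that agree with every answer, so a
   decision tree of depth q cannot separate them. *)

(** * Arranging blocks into a cycle *)

Lemma count_lt_has_predC (S : Type) (p : pred S) s :
  count p s < size s -> has (predC p) s.
Proof. by move=> lt_count; rewrite has_predC all_count neq_ltn lt_count. Qed.

Lemma consecutive_pair_outside (S : Type) (P Q : pred S) x s :
  count P (belast x s) + count Q s < size s ->
  exists s1 y z s2, [/\ x :: s = s1 ++ y :: z :: s2, ~~ P y & ~~ Q z].
Proof.
elim: s x => [|y s IH] x //=.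
case Px: (P x); case Qy: (Q y) => /= count_lt;
  last by exists [::], x, y, s; rewrite Px Qy.
all: have [|s1 [z [w [s2 [-> nPz nQw]]]]] := IH y; last by exists (x :: s1), z, w, s2.
all: lia.
Qed.

Section LinkedBlocks.
Variables (T : eqType) (x0 : T) (R : rel T).

Definition linked (U V : seq T) := R (last x0 U) (head x0 V).

Lemma cycle_slot (zs : seq (seq T)) U :
  count (fun V => ~~ linked V U) zs + count (fun V => ~~ linked U V) zs < size zs ->
  exists i, linked (last [::] (rot i zs)) U && linked U (head [::] (rot i zs)).
Proof.
case: zs => [|X zs] // count_lt.
have [|s1 [Y [Z [s2 [zsE /negbNE YU /negbNE UZ]]]]] :=
  @consecutive_pair_outside _ (fun V => ~~ linked V U) (fun V => ~~ linked U V) X (rcons zs X).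
  by rewrite belast_rcons size_rcons (permP (introT permPl (perm_rcons X zs))).
case/lastP: s2 zsE => [|s2 W]; rewrite -rcons_cons.
- rewrite (_ : s1 ++ _ = rcons (rcons s1 Y) Z); last by rewrite -!cats1 -catA.
  move=> /rcons_inj [zsE XZ]; exists 0.
  by rewrite rot0 {1}zsE last_rcons YU /= XZ.
- rewrite -!rcons_cons -rcons_cat => /rcons_inj [-> _]; exists (size (rcons s1 Y)).
  by rewrite -cat_rcons rot_size_cat last_cat last_rcons YU UZ.
Qed.

Lemma cycle_insert zs U : cycle linked zs ->
  count (fun V => ~~ linked V U) zs + count (fun V => ~~ linked U V) zs < size zs ->
  exists2 zs', perm_eq zs' (U :: zs) & cycle linked zs'.
Proof.
move=> zs_cycle count_lt; have [i /andP [last_U U_head]] := cycle_slot count_lt.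
have: cycle linked (rot i zs) by rewrite rot_cycle.
have: perm_eq (rcons (rot i zs) U) (U :: zs) by rewrite perm_rcons perm_cons perm_rot.
case rotE: (rot i zs) last_U U_head => [|Z mid] last_U U_head zs'_perm rot_cycle.
  by move: count_lt; rewrite -(size_rot i) rotE.
exists (rcons (Z :: mid) U) => //.
move: rot_cycle; rewrite /= !rcons_path last_rcons U_head andbT => /andP [-> _].
exact: last_U.
Qed.

Section Arrangement.
Variables (B : nat) (blocks : seq (seq T)).
Hypothesis few_unlinked_into :
  {in blocks, forall U, count (fun V => ~~ linked V U) blocks <= B}.
Hypothesis few_unlinked_from :
  {in blocks, forall U, count (fun V => ~~ linked U V) blocks <= B}.

Lemma count_le_blocks p s rest : perm_eq (s ++ rest) blocks -> count p s <= count p blocks.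
Proof. by move/permP <-; rewrite count_cat leq_addr. Qed.

Lemma cycle_insert_all rest zs :
  cycle linked zs -> 2 * B < size zs -> perm_eq (zs ++ rest) blocks ->
  exists2 zs', perm_eq zs' blocks & cycle linked zs'.
Proof.
elim: rest zs => [|U rest IH] zs zs_cycle zs_big zs_perm.
  by exists zs; rewrite cats0 in zs_perm.
have U_in : U \in blocks by rewrite -(perm_mem zs_perm) mem_cat mem_head orbT.
have [|zs' zs'_perm zs'_cycle] := cycle_insert (U := U) zs_cycle.
  apply: leq_ltn_trans zs_big; rewrite mul2n -addnn.
  by rewrite leq_add ?(leq_trans (count_le_blocks _ zs_perm)) ?few_unlinked_into ?few_unlinked_from.
apply: (IH zs') => //; first by rewrite (perm_size zs'_perm) ltnW.
apply: perm_trans (perm_cat zs'_perm (perm_refl rest)) _.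
by rewrite /= -cat1s perm_catCA.
Qed.

Lemma greedy_linked_path j : j + B < size blocks ->
  exists X chain rest,
    [/\ perm_eq (X :: chain ++ rest) blocks, size chain = j & path linked X chain].
Proof.
elim: j => [|j IH] j_lt.
  by case: blocks j_lt => [|X rest] // _; exists X, [::], rest.
have [X [chain [rest [chain_perm chain_size chain_path]]]] := IH (ltnW j_lt).
have last_in : last X chain \in blocks.
  by rewrite -(perm_mem chain_perm) -cat_cons mem_cat mem_last.
have rest_size : size rest = size blocks - j.+1.
  by rewrite -(perm_size chain_perm) /= size_cat chain_size subSS addKn.
have rest_perm : perm_eq (rest ++ X :: chain) blocks by rewrite perm_catC.
have /count_lt_has_predC/hasP [U U_in /negbNE last_U] :
    count (fun V => ~~ linked (last X chain) V) rest < size rest.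
  apply: leq_ltn_trans (count_le_blocks _ rest_perm) _.
  by apply: leq_ltn_trans (few_unlinked_from last_in) _; rewrite rest_size; lia.
exists X, (rcons chain U), (rem U rest); split.
- apply: perm_trans _ chain_perm; rewrite perm_cons cat_rcons.
  by rewrite perm_cat2l perm_sym perm_to_rem.
- by rewrite size_rcons chain_size.
- by rewrite rcons_path chain_path.
Qed.

(* A greedy chain of 2B + 2 blocks closes into a cycle, and a cycle of more than 2B
   blocks has a slot for any further block, of which at most 2B slots are blocked. *)
Lemma linked_cycle_arrangement : 4 * B + 2 <= size blocks ->
  exists2 zs, perm_eq zs blocks & cycle linked zs.
Proof.
move=> blocks_big.
have [|X [chain [rest [chain_perm chain_size chain_path]]]] := @greedy_linked_path (2 * B).
  lia.
have X_in : X \in blocks by rewrite -(perm_mem chain_perm) mem_head.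
have last_in : last X chain \in blocks.
  by rewrite -(perm_mem chain_perm) -cat_cons mem_cat mem_last.
have rest_size : size rest = size blocks - (2 * B).+1.
  by rewrite -(perm_size chain_perm) /= size_cat chain_size; lia.
have rest_perm : perm_eq (rest ++ X :: chain) blocks by rewrite perm_catC.
have /count_lt_has_predC/hasP [U U_in /negbNE /andP [last_U U_X]] :
    count (fun V => ~~ (linked (last X chain) V && linked V X)) rest < size rest.
  apply: (@leq_ltn_trans (count (fun V => ~~ linked (last X chain) V) rest
                          + count (fun V => ~~ linked V X) rest)).
    rewrite -count_predUI (leq_trans _ (leq_addr _ _)) //.
    by apply: sub_count => V /=; rewrite negb_and.
  apply: (@leq_ltn_trans (B + B)); last by rewrite rest_size; lia.
  by rewrite leq_add ?(leq_trans (count_le_blocks _ rest_perm))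
    ?few_unlinked_from ?few_unlinked_into.
apply: (@cycle_insert_all (rem U rest) (X :: rcons chain U)).
- by rewrite /= !rcons_path chain_path last_U last_rcons U_X.
- by rewrite /= size_rcons chain_size.
- apply: perm_trans _ chain_perm; rewrite /= perm_cons cat_rcons.
  by rewrite perm_cat2l perm_sym perm_to_rem.
Qed.

End Arrangement.

Lemma sorted_cat_flatten U zs : U != [::] -> [::] \notin zs ->
  sorted R U -> {in zs, forall V, sorted R V} -> path linked U zs ->
  sorted R (U ++ flatten zs).
Proof.
elim: zs U => [|V zs IH] U U_nil zs_nil U_sorted zs_sorted /=; first by rewrite cats0.
move: zs_nil; rewrite inE negb_or => /andP [V_nil zs_nil] /andP [UV Vzs].
case: V V_nil UV Vzs zs_sorted => [|v V] // _ UV Vzs zs_sorted.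
case: U U_nil U_sorted UV => [|u U] // _ U_sorted UV.
have UV' : R (last u U) v := UV.
rewrite [_ ++ flatten zs]/= sorted_cat_cons /= rcons_path UV' andbT.
apply/andP; split; first exact: U_sorted.
apply: (IH (v :: V) isT zs_nil (zs_sorted _ (mem_head _ _))) Vzs => W W_in.
exact/zs_sorted/mem_behead.
Qed.

Lemma cycle_flatten_linked zs : [::] \notin zs ->
  {in zs, forall V, sorted R V} -> cycle linked zs -> cycle R (flatten zs).
Proof.
case: zs => [|U zs] //; rewrite inE negb_or eq_sym => /andP [U_nil zs_nil] zs_sorted zs_cycle.
have U_sorted := zs_sorted U (mem_head _ _).
have := @sorted_cat_flatten U (rcons zs U) U_nil.
rewrite mem_rcons inE negb_or eq_sym U_nil zs_nil flatten_rcons => /(_ isT U_sorted) sorted_all.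
have {sorted_all} : sorted R (U ++ flatten zs ++ U).
  apply: sorted_all zs_cycle => V; rewrite mem_rcons inE => /orP [/eqP -> // | V_in].
  exact/zs_sorted/mem_behead.
case: U U_nil {U_sorted zs_sorted zs_cycle} => [|u U] // _.
by rewrite /= catA cat_path rcons_path => /andP [-> /= /andP [-> _]].
Qed.

End LinkedBlocks.

(** * Consecutive elements of a sequence *)

Section Consecutive.
Variable T : eqType.
Implicit Types (s p q : seq T) (a b x y z w : T).

Fixpoint consec s z w : bool :=
  if s is x :: s' then
    (if s' is y :: _ then (x == z) && (y == w) else false) || consec s' z w
  else false.

Lemma consec_cons2 x y s z w :
  consec [:: x, y & s] z w = ((x == z) && (y == w)) || consec (y :: s) z w.
Proof. by []. Qed.

Definition path_edge s z w := consec s z w || consec s w z.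

Lemma path_edgeC s z w : path_edge s z w = path_edge s w z.
Proof. by rewrite /path_edge orbC. Qed.

Lemma consec_cat p y q z w :
  consec (p ++ y :: q) z w = consec (rcons p y) z w || consec (y :: q) z w.
Proof.
elim: p => [|x p IH] //=; rewrite IH orbA; congr (_ || _ || _).
by case: p {IH}.
Qed.

Lemma consec_rev s z w : consec (rev s) z w = consec s w z.
Proof.
elim: s => [|x [|y s] IH] //.
rewrite rev_cons rev_cons.
rewrite (_ : rcons _ x = rev s ++ y :: [:: x]); last by rewrite -!cats1 -catA.
by rewrite consec_cat -rev_cons IH /= orbF orbC andbC.
Qed.

Lemma path_edge_rev s z w : path_edge (rev s) z w = path_edge s z w.
Proof. by rewrite /path_edge !consec_rev orbC. Qed.

Lemma consec_mem s a b : consec s a b -> (a \in s) && (b \in s).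
Proof.
elim: s => [|x s IH] //=; case/orP => [|/IH /andP [a_in b_in]]; last first.
  by rewrite !inE a_in b_in !orbT.
by case: s {IH} => [|y s] // /andP [/eqP -> /eqP ->]; rewrite !inE !eqxx !orbT.
Qed.

Lemma consec_index s a b : uniq s -> consec s a b -> index b s = (index a s).+1.
Proof.
elim: s => [|x s IH] //; case: s IH => [|y s] IH // /andP [x_notin s_uniq].
rewrite consec_cons2 => /orP [/andP [/eqP <- /eqP <-] | ab] /=.
  have /negPf -> : x != y by apply: contraNneq x_notin => ->; apply: mem_head.
  by rewrite !eqxx.
have /andP [a_in b_in] := consec_mem ab.
have /negPf -> : x != a by apply: contraNneq x_notin => ->.
have /negPf -> : x != b by apply: contraNneq x_notin => ->.
by have := IH s_uniq ab; rewrite /= => ->.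
Qed.

Lemma consec_next s a b : uniq s -> consec s a b -> next s a = b.
Proof.
move=> s_uniq ab; have /andP [a_in b_in] := consec_mem ab.
rewrite next_nth a_in; case: s s_uniq ab a_in b_in => [|y s] // s_uniq ab _ b_in.
by rewrite -[nth y s _]/(nth y (y :: s) (index a (y :: s)).+1) -(consec_index s_uniq ab) nth_index.
Qed.

Lemma path_edge_next_prev s z w : uniq s -> path_edge s z w -> (w == next s z) || (w == prev s z).
Proof.
move=> s_uniq /orP [] /(consec_next s_uniq) <-; first by rewrite eqxx.
by rewrite prev_next ?eqxx ?orbT.
Qed.

Lemma consec_catl p q z w : consec p z w -> consec (p ++ q) z w.
Proof.
elim: p => [|x p IH] //; case: p IH => [|y p] IH //.
by rewrite !cat_cons !consec_cons2 -cat_cons => /orP [-> // | /IH ->]; rewrite orbT.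
Qed.

Lemma consec_catr p q z w : consec q z w -> consec (p ++ q) z w.
Proof. by case: q => [|y q] // zw; rewrite consec_cat zw orbT. Qed.

Lemma consec_flatten (ss : seq (seq T)) U z w :
  U \in ss -> consec U z w -> consec (flatten ss) z w.
Proof.
elim: ss => [|V ss IH] //=; rewrite inE => /orP [/eqP <-|U_in] zw.
  exact: consec_catl.
by apply: consec_catr; apply: IH.
Qed.

Lemma consec_join X a b Y z w :
  consec (rcons X a ++ b :: Y) z w =
  [|| consec (rcons X a) z w, consec (b :: Y) z w | (a == z) && (b == w)].
Proof.
rewrite consec_cat (_ : rcons (rcons X a) b = X ++ a :: [:: b]); last by rewrite -!cats1 -catA.
by rewrite consec_cat consec_cons2 orbF -orbA [_ && _ || _]orbC.
Qed.

Lemma path_edge_join X a b Y z w :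
  path_edge (rcons X a ++ b :: Y) z w =
  [|| path_edge (rcons X a) z w, path_edge (b :: Y) z w,
      (z == a) && (w == b) | (z == b) && (w == a)].
Proof.
rewrite /path_edge !consec_join ![a == _]eq_sym ![b == _]eq_sym.
by case: (consec _ z w) (consec _ w z) (consec (b :: Y) z w) (consec (b :: Y) w z)
  (z == a) (w == b) (z == b) (w == a) => [] [] [] [] [] [] [] [].
Qed.

Lemma sorted_consec (R : rel T) s : (forall a b, consec s a b -> R a b) -> sorted R s.
Proof.
elim: s => [|x [|y s] IH] // consec_R.
rewrite [sorted _ _]/= consec_R ?consec_cons2 ?eqxx //=.
by apply: IH => a b ab; apply: consec_R; rewrite consec_cons2 ab orbT.
Qed.

Section Ends.
Variable x0 : T.

Definition is_end p w := (w == head x0 p) || (w == last x0 p).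

Lemma head_rev s : head x0 (rev s) = last x0 s.
Proof. by case/lastP: s => [|s y] //; rewrite rev_rcons last_rcons. Qed.

Lemma last_rev s : last x0 (rev s) = head x0 s.
Proof. by case: s => [|y s] //; rewrite rev_cons last_rcons. Qed.

Lemma is_end_rev s w : is_end (rev s) w = is_end s w.
Proof. by rewrite /is_end head_rev last_rev orbC. Qed.

Lemma oriented_perm p q : q \in [:: p; rev p] -> perm_eq q p.
Proof. by rewrite !inE => /orP [] /eqP ->; rewrite ?perm_rev. Qed.

Lemma oriented_path_edge p q : q \in [:: p; rev p] -> path_edge q =2 path_edge p.
Proof. by rewrite !inE => /orP [] /eqP -> z w; rewrite ?path_edge_rev. Qed.

Lemma oriented_is_end p q : q \in [:: p; rev p] -> is_end q =1 is_end p.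
Proof. by rewrite !inE => /orP [] /eqP -> w; rewrite ?is_end_rev. Qed.

Lemma orient_last p a : p != [::] -> is_end p a -> exists p', rcons p' a \in [:: p; rev p].
Proof.
move=> p_nil /orP [] /eqP ->.
- by case: p p_nil => [|y q] // _; exists (rev q); rewrite -rev_cons !inE eqxx orbT.
- by case/lastP: p p_nil => [|q y] // _; exists q; rewrite last_rcons mem_head.
Qed.

Lemma orient_head p a : p != [::] -> is_end p a -> exists p', a :: p' \in [:: p; rev p].
Proof.
move=> p_nil /orP [] /eqP ->.
- by case: p p_nil => [|y q] // _; exists q; rewrite mem_head.
- case/lastP: p p_nil => [|q y] // _; exists (rev q).
  by rewrite last_rcons -rev_rcons !inE eqxx orbT.
Qed.

End Ends.

Lemma uniq_flatten_block_eq (ss : seq (seq T)) U V x : uniq (flatten ss) ->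
  U \in ss -> V \in ss -> x \in U -> x \in V -> U = V.
Proof.
elim: ss => [|W ss IH] //=; rewrite cat_uniq => /and3P [_ W_ss ss_uniq].
rewrite !inE => /orP [/eqP -> | U_in] /orP [/eqP -> | V_in] // x_U x_V.
- by case/hasP: W_ss; exists x => //; apply/flattenP; exists V.
- by case/hasP: W_ss; exists x => //; apply/flattenP; exists U.
- exact: IH.
Qed.

Lemma uniq_blocks (ss : seq (seq T)) : uniq (flatten ss) -> [::] \notin ss -> uniq ss.
Proof.
elim: ss => [|W ss IH] //=; rewrite cat_uniq inE negb_or => /and3P [_ W_ss ss_uniq].
case/andP=> W_nil ss_nil; rewrite IH // andbT; apply: contra W_ss => W_in.
case: W W_nil W_in => [|w W] // _ W_in; apply/hasP; exists w; last exact: mem_head.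
by apply/flattenP; exists (w :: W) => //; apply: mem_head.
Qed.

End Consecutive.

(** * Graphs as bit strings *)

Section GraphEncoding.
Variable n : nat.
Implicit Types (x A : graph n) (u v : 'I_n) (s : seq 'I_n).

Lemma gadjC x u v : gadj x u v = gadj x v u.
Proof. by apply/existsP/existsP => -[e e_uv]; exists e; rewrite orbC. Qed.

Lemma gadj_edge x (e : edge_idx n) : gadj x (val e).1 (val e).2 = x e.
Proof.
apply/existsP/idP => [[e' /andP [e'_e x_e']] | x_e]; last first.
  by exists e; rewrite -surjective_pairing eqxx x_e.
have lt_e := valP e; have lt_e' := valP e'.
case/orP: e'_e => /eqP e'E; last by move: lt_e'; rewrite e'E /= ltnNge ltnW.
by rewrite -(_ : e' = e) //; apply: val_inj; rewrite e'E -surjective_pairing.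
Qed.

Lemma edge_flip (e e' : edge_idx n) :
  ((val e').1 == (val e).2) && ((val e').2 == (val e).1) = false.
Proof.
apply/negbTE/andP => -[/eqP e'1 /eqP e'2].
by move: (valP e) (valP e'); rewrite e'1 e'2 => /ltn_trans lt12 /lt12; rewrite ltnn.
Qed.

Lemma edge_eqE (e e' : edge_idx n) :
  ((val e').1 == (val e).1) && ((val e').2 == (val e).2) = (e' == e).
Proof. by rewrite -xpair_eqE -!surjective_pairing val_eqE. Qed.

Definition graph_of (adj : 'I_n -> 'I_n -> bool) : graph n :=
  [ffun e => adj (val e).1 (val e).2].

Lemma gadj_graph_of adj u v : (forall a b, adj a b = adj b a) -> u != v ->
  gadj (graph_of adj) u v = adj u v.
Proof.
move=> adjC; wlog lt_uv : u v / u < v => [gen uv|_].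
  case: (ltngtP u v) => [lt_uv|gt_uv|/val_inj eq_uv]; first exact: gen.
  - by rewrite gadjC adjC gen // eq_sym.
  - by rewrite eq_uv eqxx in uv.
by have := gadj_edge (graph_of adj) (exist _ (u, v) lt_uv); rewrite ffunE.
Qed.

Definition add_edge A (e : edge_idx n) : graph n := [ffun e' => A e' || (e' == e)].

Lemma gadj_add_edge A e u v :
  gadj (add_edge A e) u v = gadj A u v || (val e == (u, v)) || (val e == (v, u)).
Proof.
apply/existsP/idP => [[e' /andP [e'_uv]] | ].
  rewrite ffunE => /orP [A_e' | /eqP e'E]; last by rewrite -e'E -orbA e'_uv orbT.
  by apply/orP; left; apply/orP; left; apply/existsP; exists e'; rewrite e'_uv.
rewrite -orbA => /orP [/existsP [e' /andP [e'_uv A_e']] | e_uv].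
  by exists e'; rewrite e'_uv ffunE A_e'.
by exists e; rewrite e_uv ffunE eqxx orbT.
Qed.

Lemma cyc_adjC s u v : cyc_adj s u v = cyc_adj s v u.
Proof. by rewrite /cyc_adj eq_sym; do !bool_congr; rewrite orbC. Qed.

Lemma cyc_adj_consec s a b : uniq s -> consec s a b -> cyc_adj s a b.
Proof.
move=> s_uniq ab; have /andP [a_in b_in] := consec_mem ab.
have a_b : a != b by apply/eqP => a_eq_b; have := consec_index s_uniq ab; rewrite a_eq_b; lia.
by rewrite /cyc_adj a_b a_in b_in (consec_next s_uniq ab) eqxx.
Qed.

Lemma cyc_adj_cycle (R : rel 'I_n) s a b : cycle R s -> cyc_adj s a b -> R a b || R b a.
Proof.
move=> s_cycle /and4P [_ a_in b_in /orP [] /eqP ->].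
- by rewrite (next_cycle s_cycle a_in).
- by rewrite (next_cycle s_cycle b_in) orbT.
Qed.

Definition cycles_graph (cs : seq (seq 'I_n)) : graph n :=
  graph_of (fun a b => has (fun c => cyc_adj c a b) cs).

Lemma gadj_cycles_graph cs u v : u != v ->
  gadj (cycles_graph cs) u v = has (fun c => cyc_adj c u v) cs.
Proof. by apply: gadj_graph_of => a b; apply: eq_has => c; apply: cyc_adjC. Qed.

Lemma one_cycle_graph s : uniq s -> size s = n -> one_cycle (cycles_graph [:: s]).
Proof. by exists s; split=> // u v uv; rewrite gadj_cycles_graph //= orbF. Qed.

Lemma two_cycles_graph s1 s2 : uniq (s1 ++ s2) -> size s1 = n./2 -> size s2 = n./2 ->
  two_cycles (cycles_graph [:: s1; s2]).
Proof. by exists s1, s2; split=> // u v uv; rewrite gadj_cycles_graph //= orbF. Qed.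

Lemma even_half_sum : ~~ odd n -> n = n./2 + n./2.
Proof. by move=> n_even; rewrite -{1}(odd_double_half n) (negbTE n_even) addnn. Qed.

Lemma one_and_two_cycles : ~~ odd n -> exists x1 x2, one_cycle x1 /\ two_cycles x2.
Proof.
move=> /even_half_sum n_half; set s := enum 'I_n.
have s_size : size s = n by rewrite size_enum_ord.
exists (cycles_graph [:: s]), (cycles_graph [:: take n./2 s; drop n./2 s]); split.
  exact/one_cycle_graph/s_size/enum_uniq.
apply: two_cycles_graph; first by rewrite cat_take_drop enum_uniq.
  by rewrite size_takel // s_size {2}n_half leq_addr.
by rewrite size_drop s_size {1}n_half addnK.
Qed.

End GraphEncoding.

(** * The adversary *)

Section PathSystem.
Variables (n : nat) (x0 : 'I_n).
Implicit Types (ps : seq (seq 'I_n)) (A : graph n) (a b u v w z : 'I_n).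

(* A position: the paths [ps] partition the vertices and their edges are the queries
   answered 1; a graph [A] holds the queries answered 0. *)
Definition padj ps u v := has (fun p => path_edge p u v) ps.
Definition padjE ps (e : edge_idx n) := padj ps (val e).1 (val e).2.
Definition endpoint ps w := has (fun p => is_end x0 p w) ps.
Definition same_path ps u w := has (fun p => (u \in p) && (w \in p)) ps.
Definition degA A u := #|[set w | gadj A u w]|.
Definition degP ps u := #|[set w | padj ps u w]|.
Definition cross_nbrs ps A u :=
  [set w | [&& endpoint ps w, ~~ same_path ps u w & gadj A u w]].

Lemma padjC ps u v : padj ps u v = padj ps v u.
Proof. by apply: eq_has => p; apply: path_edgeC. Qed.

Lemma same_pathC ps u w : same_path ps u w = same_path ps w u.
Proof. by apply: eq_has => p; rewrite andbC. Qed.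

Lemma degP_le2 ps u : uniq (flatten ps) -> degP ps u <= 2.
Proof.
set s := flatten ps => s_uniq.
apply: (@leq_trans #|[set next s u; prev s u]|); last by rewrite cards2; case: (_ != _).
apply: subset_leq_card; apply/subsetP => w; rewrite !inE => /hasP [p p_in p_uw].
apply: path_edge_next_prev s_uniq _.
by case/orP: p_uw => /(consec_flatten p_in) uw; rewrite /path_edge uw ?orbT.
Qed.

Lemma merge_paths ps a b : uniq (flatten ps) -> [::] \notin ps ->
  endpoint ps a -> endpoint ps b -> ~~ same_path ps a b ->
  exists ps', [/\ perm_eq (flatten ps') (flatten ps), [::] \notin ps', (size ps').+1 = size ps,
    forall z w, padj ps' z w = [|| padj ps z w, (z == a) && (w == b) | (z == b) && (w == a)] &
    (forall w, endpoint ps' w -> endpoint ps w) /\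
    forall z w, same_path ps z w -> same_path ps' z w].
Proof.
move=> ps_uniq ps_nil /hasP [X X_in a_X] /hasP [Y Y_in b_Y] a_b.
have X_nil : X != [::] by apply: contraNneq ps_nil => <-.
have Y_nil : Y != [::] by apply: contraNneq ps_nil => <-.
have [X' X'_or] := orient_last X_nil a_X; have [Y' Y'_or] := orient_head Y_nil b_Y.
have a_in : a \in X by rewrite -(perm_mem (oriented_perm X'_or)) mem_rcons mem_head.
have b_in : b \in Y by rewrite -(perm_mem (oriented_perm Y'_or)) mem_head.
have X_Y : X != Y by apply: contraNneq a_b => XY; apply/hasP; exists X; rewrite // a_in XY b_in.
have [rest ps_perm] : exists rest, perm_eq ps [:: X, Y & rest].
  exists (rem Y (rem X ps)); apply: perm_trans (perm_to_rem X_in) _.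
  by rewrite perm_cons perm_to_rem // (mem_rem_uniq _ (uniq_blocks ps_uniq ps_nil)) !inE eq_sym X_Y.
have has_ps (P : pred (seq 'I_n)) : has P ps = [|| P X, P Y | has P rest].
  by rewrite (perm_has P ps_perm).
set Z := rcons X' a ++ b :: Y'.
have head_Z : head x0 Z = head x0 (rcons X' a) by rewrite /Z; case: (X').
have last_Z : last x0 Z = last x0 (b :: Y') by rewrite last_cat.
have mem_Z u : (u \in X) || (u \in Y) -> u \in Z.
  by rewrite mem_cat (perm_mem (oriented_perm X'_or)) (perm_mem (oriented_perm Y'_or)).
exists (Z :: rest); split.
- rewrite perm_sym (permPl (perm_flatten ps_perm)) /= -catA perm_sym.
  exact: perm_cat (oriented_perm X'_or) (perm_cat (oriented_perm Y'_or) (perm_refl _)).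
- have: [::] \notin [:: X, Y & rest] by rewrite -(perm_mem ps_perm).
  by rewrite !inE !negb_or => /and3P [_ _ ->]; rewrite andbT eq_sym -size_eq0 size_cat size_rcons.
- by rewrite (perm_size ps_perm).
- move=> z w; rewrite /padj has_ps /= path_edge_join.
  rewrite (oriented_path_edge X'_or) (oriented_path_edge Y'_or).
  by case: (path_edge X z w) (path_edge Y z w) (has _ rest) (_ && _) (_ && _) => [] [] [] [] [].
split=> [w | z w].
- rewrite /endpoint has_ps /= => /orP [|->]; last by rewrite !orbT.
  rewrite -(oriented_is_end x0 X'_or) -(oriented_is_end x0 Y'_or) /is_end head_Z last_Z.
  by case/orP => ->; rewrite ?orbT.
- rewrite /same_path has_ps /= => /or3P [] zw; last by rewrite zw orbT.
  + by case/andP: zw => z_in w_in; rewrite !mem_Z ?z_in ?w_in.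
  + by case/andP: zw => z_in w_in; rewrite !mem_Z ?z_in ?w_in ?orbT.
Qed.

End PathSystem.

Lemma sum_pred1_nat (I : finType) (a : I) : \sum_(u : I) (u == a : nat) = 1.
Proof. by rewrite (bigD1 a) //= eqxx big1 // => u /negbTE ->. Qed.

Section AddEdge.
Variable n : nat.
Implicit Types (A : graph n) (e : edge_idx n) (u : 'I_n).

Lemma degA_add_edge A e u :
  degA (add_edge A e) u <= degA A u + (u == (val e).1) + (u == (val e).2).
Proof.
set a := (val e).1; set b := (val e).2; rewrite /degA -addnA.
pose new := (if u == a then [set b] else set0) :|: (if u == b then [set a] else set0).
apply: (@leq_trans #|[set w | gadj A u w] :|: new|).
  apply/subset_leq_card/subsetP => w; rewrite in_setU !in_set gadj_add_edge -orbA.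
  by case/or3P => [-> // | /eqP eE | /eqP eE]; rewrite /new /a /b eE /= eqxx !inE eqxx ?orbT.
apply: leq_trans (leq_card_setU _ _) _; rewrite leq_add2l.
by apply: leq_trans (leq_card_setU _ _) _; apply: leq_add; case: ifP; rewrite ?cards1 ?cards0.
Qed.

Lemma degA_add_edge_le A e u : degA (add_edge A e) u <= (degA A u).+1.
Proof.
apply: (leq_trans (degA_add_edge A e u)); have := valP e.
case: (u =P (val e).1) => [<-|_]; case: (u =P (val e).2) => [<-|_] /=;
  rewrite ?ltnn //; lia.
Qed.

Lemma degA_add_edge_ge A e u : degA A u <= degA (add_edge A e) u.
Proof.
by apply/subset_leq_card/subsetP => w; rewrite !inE gadj_add_edge => ->.
Qed.

End AddEdge.

Section Adversary.
Variables (n : nat) (x0 : 'I_n) (T : nat).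
Implicit Types (ps : seq (seq 'I_n)) (A : graph n) (e : edge_idx n) (u w : 'I_n).

Local Notation endpoint := (endpoint x0).
Local Notation cross_nbrs := (cross_nbrs x0).

Definition heavy A u := T <= degA A u.

Definition potential ps A := \sum_(u : 'I_n) heavy A u * degP ps u.

Record adv_inv ps A q : Prop := AdvInv {
  inv_partition : perm_eq (flatten ps) (enum 'I_n);
  inv_nonempty : [::] \notin ps;
  inv_disjoint : forall e, A e -> ~~ padjE ps e;
  inv_cross : forall u, endpoint ps u -> #|cross_nbrs ps A u| <= T;
  inv_degA : \sum_(u : 'I_n) degA A u <= 2 * q;
  inv_merges : n <= size ps + q;
  (* every merge adds a path edge at a heavy vertex *)
  inv_potential : n <= size ps + potential ps A }.

Definition answered ps A e := A e || padjE ps e.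

Definition consistent ps A (x : graph n) := forall e, answered ps A e -> x e = padjE ps e.

Definition merges ps A e :=
  [&& endpoint ps (val e).1, endpoint ps (val e).2,
      ~~ same_path ps (val e).1 (val e).2 & heavy A (val e).1 || heavy A (val e).2].

Lemma cross_nbrs_le_degA ps A u : #|cross_nbrs ps A u| <= degA A u.
Proof. by apply/subset_leq_card/subsetP => w; rewrite !inE => /and3P []. Qed.

Lemma adv_inv_add_absent ps A q e : adv_inv ps A q -> ~~ answered ps A e ->
  ~~ merges ps A e -> adv_inv ps (add_edge A e) q.+1.
Proof.
case=> part nil disj cross degA_sum merges_le pot.
rewrite negb_or => /andP [nA_e nP_e] no_merge; split=> //.
- by move=> e'; rewrite ffunE => /orP [/disj | /eqP ->].
- move=> u u_end.
  have [old|] := boolP [forall w, (w \in cross_nbrs ps (add_edge A e) u) ==> gadj A u w].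
    apply: leq_trans (cross u u_end); apply/subset_leq_card/subsetP => w w_in.
    move: (forallP old w) w_in; rewrite !inE => /implyP uw w_new.
    by rewrite (uw w_new); case/and3P: w_new => -> ->.
  rewrite negb_forall => /existsP [w]; rewrite negb_imply inE gadj_add_edge -orbA.
  case/andP => /and3P [w_end nsame] /orP [->//|e_uw] nA_uw.
  have: ~~ (heavy A u || heavy A w).
    by case/orP: e_uw no_merge => /eqP eE; rewrite /merges eE /= u_end w_end ?nsame //
      same_pathC nsame orbC.
  rewrite negb_or /heavy -ltnNge => /andP [light_u _].
  apply: (leq_trans (cross_nbrs_le_degA _ _ _)).
  exact: leq_trans (degA_add_edge_le _ _ _) light_u.
- apply: (@leq_trans (\sum_(u : 'I_n) (degA A u + (u == (val e).1) + (u == (val e).2)))).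
    by apply: leq_sum => u _; apply: degA_add_edge.
  by rewrite !big_split /= !sum_pred1_nat -addnA addnC mulnS leq_add2l.
- by rewrite addnS (leq_trans merges_le).
- apply: leq_trans pot _; rewrite leq_add2l; apply: leq_sum => u _.
  rewrite leq_mul2r; case: (boolP (heavy A u)) => [heavy_u|]; rewrite ?orbT //.
  by rewrite /heavy (leq_trans heavy_u (degA_add_edge_ge _ _ _)) orbT.
Qed.

Lemma potential_lt ps ps' A h o : (forall z w, padj ps z w -> padj ps' z w) ->
  heavy A h -> padj ps' h o -> ~~ padj ps h o -> potential ps A < potential ps' A.
Proof.
move=> sub heavy_h new_ho old_ho.
have degP_le u : degP ps u <= degP ps' u.
  by apply/subset_leq_card/subsetP => w; rewrite !inE => /sub.
have degP_lt : degP ps h < degP ps' h.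
  apply/proper_card/properP; split; first by apply/subsetP => w; rewrite !inE => /sub.
  by exists o; rewrite !inE.
rewrite /potential (bigD1 h) //= [X in _ < X](bigD1 h) //= heavy_h !mul1n -addSn.
by rewrite leq_add // leq_sum // => u _; rewrite leq_mul2l degP_le orbT.
Qed.

Lemma adv_inv_merge ps A q e : adv_inv ps A q -> ~~ answered ps A e -> merges ps A e ->
  exists ps', adv_inv ps' A q.+1 /\ forall e', padjE ps' e' = padjE ps e' || (e' == e).
Proof.
case=> part nil disj cross degA_sum merges_le pot.
rewrite negb_or => /andP [nA_e nP_e] /and4P [a_end b_end nsame heavy_ab].
have ps_uniq : uniq (flatten ps) by rewrite (perm_uniq part) enum_uniq.
have [ps' [part' nil' size' padj' [end' same']]] := merge_paths ps_uniq nil a_end b_end nsame.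
have padjE' e' : padjE ps' e' = padjE ps e' || (e' == e).
  by rewrite /padjE padj' edge_flip orbF edge_eqE.
have pot_lt : potential ps A < potential ps' A.
  have sub z w : padj ps z w -> padj ps' z w by rewrite padj' => ->.
  case/orP: heavy_ab => [heavy_a | heavy_b].
  - by apply: (potential_lt sub heavy_a) nP_e; rewrite padj' !eqxx /= orbT.
  - apply: (potential_lt sub heavy_b); last by rewrite padjC; exact: nP_e.
    by rewrite padj' !eqxx /= !orbT.
exists ps'; split=> //; split=> //.
- exact: perm_trans part.
- by move=> e' A_e'; rewrite padjE' negb_or disj //=; apply: contraNneq nA_e => <-.
- move=> u /end' u_end; apply: leq_trans (cross u u_end).
  apply/subset_leq_card/subsetP => w; rewrite !inE => /and3P [/end' -> nsame' ->].
  by rewrite (contra (same' u w)).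
- by apply: leq_trans degA_sum _; rewrite leq_mul2l leqnSn orbT.
- by rewrite addnS -addSn size'.
- by apply: leq_trans pot _; rewrite -size' addSnnS leq_add2l.
Qed.

Lemma adv_answer ps A q e : adv_inv ps A q ->
  exists ps' A' q', [/\ adv_inv ps' A' q', q' <= q.+1, answered ps' A' e &
    forall x, consistent ps' A' x -> consistent ps A x].
Proof.
move=> inv; have [|unanswered] := boolP (answered ps A e); first by exists ps, A, q.
have [merge|no_merge] := boolP (merges ps A e).
- have [ps' [inv' padjE']] := adv_inv_merge inv unanswered merge.
  exists ps', A, q.+1; split=> //; first by rewrite /answered padjE' eqxx !orbT.
  move=> x x_cons e' e'_ans.
  have e'_e : (e' == e) = false by apply: contraNF unanswered => /eqP <-.
  have e'_ans' : answered ps' A e' by rewrite /answered padjE' e'_e orbF.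
  by rewrite x_cons // padjE' e'_e orbF.
- exists ps, (add_edge A e), q.+1; split; first exact: adv_inv_add_absent.
  + by [].
  + by rewrite /answered ffunE eqxx orbT.
  + move=> x x_cons e' e'_ans; apply: x_cons.
    by move: e'_ans; rewrite /answered ffunE => /orP [] ->; rewrite ?orbT.
Qed.

Variable D : nat.
Hypothesis completable : forall ps A q, adv_inv ps A q -> q <= D ->
  exists x1 x2, [/\ consistent ps A x1, consistent ps A x2, one_cycle x1 & two_cycles x2].

Lemma adversary (t : dtree (edge_idx n)) ps A q :
  adv_inv ps A q -> q + dt_depth t <= D ->
  exists x1 x2, [/\ consistent ps A x1, consistent ps A x2, one_cycle x1, two_cycles x2
    & dt_eval t x1 = dt_eval t x2].
Proof.
elim: t ps A q => [b | e t0 IH0 t1 IH1] ps A q inv depth_le.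
  have [x1 [x2 [c1 c2 one1 two2]]] := completable inv (leq_trans (leq_addr _ _) depth_le).
  by exists x1, x2.
have [ps' [A' [q' [inv' q'_le e_ans sub]]]] := adv_answer e inv.
have eval_node x : consistent ps' A' x ->
    dt_eval (Node e t0 t1) x = dt_eval (if padjE ps' e then t1 else t0) x.
  by move=> x_cons /=; rewrite x_cons //; case: (padjE _ _).
have [x1 [x2 [c1 c2 one1 two2 same]]] : exists x1 x2, [/\ consistent ps' A' x1,
    consistent ps' A' x2, one_cycle x1, two_cycles x2 &
    dt_eval (if padjE ps' e then t1 else t0) x1 = dt_eval (if padjE ps' e then t1 else t0) x2].
  have branch_le (t' : dtree (edge_idx n)) :
      dt_depth t' <= maxn (dt_depth t0) (dt_depth t1) -> q' + dt_depth t' <= D.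
    by move=> t'_le; apply: leq_trans depth_le; rewrite /= addnS -addSn leq_add.
  by case: (padjE ps' e); [apply: IH1 _ _ _ inv' (branch_le _ (leq_maxr _ _)) |
    apply: IH0 _ _ _ inv' (branch_le _ (leq_maxl _ _))].
by exists x1, x2; split; rewrite ?eval_node //; apply: sub.
Qed.

End Adversary.

(** * Completing a position into one or two cycles *)

Lemma size_flatten_ge (T : Type) k (ss : seq (seq T)) :
  all (fun s => k <= size s) ss -> k * size ss <= size (flatten ss).
Proof.
elim: ss => [|s ss IH] /=; first by rewrite muln0.
by case/andP=> k_s k_ss; rewrite mulnS size_cat leq_add // IH.
Qed.

Lemma size_flatten_singletons (T : Type) (ss : seq (seq T)) :
  all (fun s => size s == 1) ss -> size (flatten ss) = size ss.
Proof. by elim: ss => [|s ss IH] //= /andP [/eqP s1 /IH ss1]; rewrite size_cat s1 ss1. Qed.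

Lemma split_blocks (T : eqType) (ss : seq (seq T)) m :
  [::] \notin ss -> size (flatten ss) = m + m -> 2 * (size (flatten ss) - size ss) <= m ->
  exists g1 g2 : seq (seq T),
    [/\ perm_eq (g1 ++ g2) ss, size (flatten g1) = m, size (flatten g2) = m,
    size g1 + (size (flatten ss) - size ss) = m & size g2 = m].
Proof.
move=> ss_nil ss_flat excess_le.
set large := [seq s <- ss | 1 < size s]; set small := [seq s <- ss | ~~ (1 < size s)].
have ss_perm : perm_eq (large ++ small) ss by rewrite perm_filterC.
have small1 : all (fun s => size s == 1) small.
  apply/allP => s; rewrite mem_filter -leqNgt => /andP [].
  by case: s => [|x [|]] // _ nil_in; rewrite nil_in in ss_nil.
have large2 : 2 * size large <= size (flatten large).
  by apply: size_flatten_ge; apply/allP => s; rewrite mem_filter => /andP [].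
have flat_sizes : size (flatten large) + size small = m + m.
  rewrite -(size_flatten_singletons small1) -size_cat -flatten_cat.
  by rewrite (perm_size (perm_flatten ss_perm)).
have sizes : size large + size small = size ss by rewrite -size_cat (perm_size ss_perm).
set r := m - size (flatten large).
have r_le : r <= size small by rewrite /r; lia.
have take1 : all (fun s => size s == 1) (take r small).
  by apply/allP => s /mem_take; apply: (allP small1).
have drop1 : all (fun s => size s == 1) (drop r small).
  by apply/allP => s /mem_drop; apply: (allP small1).
exists (large ++ take r small), (drop r small); split.
- by rewrite -catA cat_take_drop.
- rewrite flatten_cat size_cat (size_flatten_singletons take1) size_takel // /r; lia.
- rewrite (size_flatten_singletons drop1) size_drop /r; lia.
- rewrite size_cat /= size_takel // /r; lia.
- rewrite size_drop /= /r; lia.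
Qed.

Lemma few_merges m q M T : 12 <= m -> T = (m + m) %/ 16 -> 512 * q < (m + m) ^ 2 ->
  M <= q -> M * T <= 4 * q -> M + 4 * T + 6 <= m /\ 2 * M <= m.
Proof.
move=> m_ge T_def q_lt M_le MT_le.
have T_le : 16 * T <= m + m by rewrite T_def mulnC leq_divM.
have T_gt : m + m < 16 * T + 16 by rewrite T_def mulnC -mulSnr ltn_ceil.
rewrite expnS expn1 in q_lt.
by have [m_le|m_gt] := leqP m 33; nia.
Qed.

Section Completion.
Variables (n : nat) (x0 : 'I_n) (T : nat) (ps : seq (seq 'I_n)) (A : graph n) (q : nat).
Hypothesis inv : adv_inv x0 T ps A q.

Local Notation endpoint := (endpoint x0).

Let allowed : rel 'I_n := fun u v => ~~ gadj A u v.

Lemma ps_uniq : uniq (flatten ps).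
Proof. by rewrite (perm_uniq (inv_partition inv)) enum_uniq. Qed.

Lemma merges_bound : (n - size ps) * T <= 4 * q.
Proof.
case: inv => _ _ _ _ degA_sum _ pot.
set H := \sum_(u : 'I_n) (heavy T A u : nat).
have pot_le : potential T ps A <= H * 2.
  rewrite /H big_distrl; apply: leq_sum => u _.
  by rewrite leq_mul2l degP_le2 ?orbT //; apply: ps_uniq.
have HT_le : H * T <= 2 * q.
  apply: leq_trans degA_sum; rewrite /H big_distrl; apply: leq_sum => u _.
  by case: (boolP (heavy T A u)) => //= heavy_u; rewrite mul1n.
have M_le : n - size ps <= H * 2 by rewrite leq_subLR (leq_trans pot) ?leq_add2l.
by clear -M_le HT_le; nia.
Qed.

Lemma ends_in_endpoint V : V \in ps ->
  [/\ head x0 V \in V, endpoint ps (head x0 V), last x0 V \in V & endpoint ps (last x0 V)].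
Proof.
move=> V_in; have V_nil : V != [::] by apply: contraNneq (inv_nonempty inv) => <-.
have end_V w : is_end x0 V w -> endpoint ps w by move=> w_end; apply/hasP; exists V.
rewrite !end_V /is_end ?eqxx ?orbT //.
by case: V V_nil {V_in end_V} => [|v V] // _; rewrite /= mem_head mem_last.
Qed.

(* At most T of the f V are cross neighbours of z; the extra one is the path of z. *)
Lemma count_adj_ends (f : seq 'I_n -> 'I_n) U z :
  {in ps, forall V, (f V \in V) && endpoint ps (f V)} ->
  U \in ps -> z \in U -> endpoint ps z ->
  count (fun V => gadj A z (f V)) ps <= T.+1.
Proof.
move=> f_end U_in z_U z_end.
have f_inj : {in ps &, injective f}.
  move=> V V' V_in V'_in fVV'; apply: (uniq_flatten_block_eq ps_uniq V_in V'_in (x := f V)).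
  - by case/andP: (f_end V V_in).
  - by rewrite fVV'; case/andP: (f_end V' V'_in).
have f_uniq : uniq (map f ps).
  by rewrite map_inj_in_uniq // (uniq_blocks ps_uniq (inv_nonempty inv)).
rewrite -(count_map f (gadj A z)) -size_filter -(card_uniqP (filter_uniq _ f_uniq)).
apply: (@leq_trans #|f U |: cross_nbrs x0 ps A z|).
  apply/subset_leq_card/subsetP => w; rewrite mem_filter.
  case/andP=> zw /mapP [V V_in wE]; rewrite {w}wE in zw *.
  rewrite !inE; have /andP [fV_V fV_end] := f_end V V_in.
  case same: (same_path ps z (f V)); last by rewrite fV_end zw orbT.
  case/hasP: same => W W_in /andP [z_W fV_W].
  rewrite (uniq_flatten_block_eq ps_uniq V_in U_in (x := f V)) ?eqxx //.
  by rewrite (uniq_flatten_block_eq ps_uniq U_in W_in z_U z_W).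
by rewrite cardsU1 -add1n leq_add ?leq_b1 ?(inv_cross inv).
Qed.

Lemma block_sorted U : U \in ps -> sorted allowed U.
Proof.
move=> U_in; apply: sorted_consec => a b ab; apply/negP => /existsP [e /andP [e_ab A_e]].
have /negP := inv_disjoint inv A_e; apply; apply/hasP; exists U => //.
by case/orP: e_ab => /eqP ->; rewrite /path_edge ab ?orbT.
Qed.

Lemma cycle_through_blocks (g rest : seq (seq 'I_n)) :
  perm_eq (g ++ rest) ps -> 4 * T.+1 + 2 <= size g ->
  exists s, [/\ perm_eq s (flatten g), cycle allowed s &
    {in g, forall U a b, consec U a b -> consec s a b}].
Proof.
move=> g_perm g_big.
have g_ps : {subset g <= ps} by move=> U U_in; rewrite -(perm_mem g_perm) mem_cat U_in.
have count_le (p : pred (seq 'I_n)) : count p g <= count p ps.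
  by rewrite -(permP g_perm) count_cat leq_addr.
have [U /g_ps U_in|U /g_ps U_in|zs zs_perm zs_cycle] :=
  @linked_cycle_arrangement _ x0 allowed T.+1 g _ _ g_big.
- apply: leq_trans (count_le _) _; have [hU_in hU_end _ _] := ends_in_endpoint U_in.
  rewrite (eq_count (a2 := fun V => gadj A (head x0 U) (last x0 V))) => [|V]; last first.
    by rewrite /linked negbK gadjC.
  by apply: (count_adj_ends _ U_in) => // V /ends_in_endpoint [_ _ -> ->].
- apply: leq_trans (count_le _) _; have [_ _ lU_in lU_end] := ends_in_endpoint U_in.
  rewrite (eq_count (a2 := fun V => gadj A (last x0 U) (head x0 V))) => [|V]; last first.
    by rewrite /linked negbK.
  by apply: (count_adj_ends _ U_in) => // V /ends_in_endpoint [-> -> _ _].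
exists (flatten zs); split.
- exact: perm_flatten.
- apply: cycle_flatten_linked zs_cycle.
  + by rewrite (perm_mem zs_perm); apply: contra (g_ps _) (inv_nonempty inv).
  + by move=> V; rewrite (perm_mem zs_perm) => /g_ps; apply: block_sorted.
- by move=> U U_in a b; apply: consec_flatten; rewrite (perm_mem zs_perm).
Qed.

Lemma consistent_cycles cs : all uniq cs -> all (cycle allowed) cs ->
  {in ps, forall U a b, consec U a b -> has (fun c => consec c a b) cs} ->
  consistent ps A (cycles_graph cs).
Proof.
move=> cs_uniq cs_cycle cover e; rewrite /answered /cycles_graph ffunE.
have cyc_adj_cover U a b : U \in ps -> consec U a b -> has (fun c => cyc_adj c a b) cs.
  move=> U_in /(cover U U_in) /hasP [c c_in c_ab]; apply/hasP; exists c => //.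
  by apply: cyc_adj_consec c_ab; apply: (allP cs_uniq).
case pe: (padjE ps e); last rewrite orbF => A_e.
- move=> _; case/hasP: pe => U U_in /orP [] /(cyc_adj_cover U _ _ U_in) //.
  by under eq_has => c do rewrite cyc_adjC.
- apply/negbTE/hasPn => c c_in; apply/negP => /(cyc_adj_cycle (allP cs_cycle c c_in)).
  by rewrite /allowed [gadj A (val e).2 _]gadjC gadj_edge A_e.
Qed.

Hypotheses (n_big : 24 <= n) (n_even : ~~ odd n) (T_def : T = n %/ 16)
  (q_small : 512 * q < n ^ 2).

Lemma completion :
  exists x1 x2, [/\ consistent ps A x1, consistent ps A x2, one_cycle x1 & two_cycles x2].
Proof.
have n_half := even_half_sum n_even; set m := n./2 in n_half.
have ps_flat : size (flatten ps) = n by rewrite (perm_size (inv_partition inv)) size_enum_ord.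
have ps_le : size ps <= n.
  have := @size_flatten_ge _ 1 ps; rewrite mul1n ps_flat; apply; apply/allP => U U_in.
  by rewrite lt0n size_eq0; apply: contraNneq (inv_nonempty inv) => <-.
have [few1 few2] : n - size ps + 4 * T + 6 <= m /\ 2 * (n - size ps) <= m.
  apply: (@few_merges m q); rewrite -?n_half //; first lia.
    by rewrite leq_subLR (inv_merges inv).
  exact: merges_bound.
have [|g1 [g2 [g_perm g1_flat g2_flat g1_size g2_size]]] :=
  split_blocks (inv_nonempty inv) (etrans ps_flat n_half); first by rewrite ps_flat.
(* unfolds the eqType carrier of [split_blocks] so that lia sees [size g1] as one atom *)
rewrite /= in g1_size g2_size.
have ps_perm : perm_eq (ps ++ [::]) ps by rewrite cats0.
have [|s [s_perm s_cycle s_cover]] := cycle_through_blocks ps_perm; first lia.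
have [|s1 [s1_perm s1_cycle s1_cover]] := cycle_through_blocks g_perm; first lia.
have g21_perm : perm_eq (g2 ++ g1) ps by rewrite perm_catC.
have [|s2 [s2_perm s2_cycle s2_cover]] := cycle_through_blocks g21_perm; first lia.
have s_uniq : uniq s by rewrite (perm_uniq s_perm) ps_uniq.
have s12_uniq : uniq (s1 ++ s2).
  rewrite (perm_uniq (perm_cat s1_perm s2_perm)) -flatten_cat.
  by rewrite (perm_uniq (perm_flatten g_perm)) ps_uniq.
have /andP [s1_uniq s2_uniq] : uniq s1 && uniq s2.
  by move: s12_uniq; rewrite cat_uniq => /and3P [-> _ ->].
exists (cycles_graph [:: s]), (cycles_graph [:: s1; s2]); split.
- by apply: consistent_cycles; rewrite /= ?s_uniq ?s_cycle // => U U_in a b /s_cover ->.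
- apply: consistent_cycles; rewrite /= ?s1_uniq ?s2_uniq ?s1_cycle ?s2_cycle // => U + a b.
  by rewrite -(perm_mem g_perm) mem_cat => /orP [/s1_cover|/s2_cover] cover /cover ->;
    rewrite ?orbT.
- by apply: one_cycle_graph; rewrite // (perm_size s_perm).
- by apply: two_cycles_graph; rewrite // (perm_size s1_perm, perm_size s2_perm).
Qed.

End Completion.

Lemma adv_inv_init n (x0 : 'I_n) T :
  adv_inv x0 T [seq [:: i] | i <- enum 'I_n] [ffun _ => false] 0.
Proof.
set A0 : graph n := [ffun _ => false].
have degA0 u : degA A0 u = 0.
  apply/eqP; rewrite cards_eq0; apply/eqP/setP => w; rewrite !inE.
  by apply/existsP => -[e]; rewrite ffunE andbF.
have ps_size : size [seq [:: i] | i <- enum 'I_n] = n by rewrite size_map size_enum_ord.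
split; rewrite ?flatten_seq1 ?ps_size ?leq_addr //.
- by apply/mapP => -[].
- by move=> e; rewrite ffunE.
- by move=> u _; rewrite (leq_trans (cross_nbrs_le_degA _ _ _ _)) // degA0.
- by rewrite big1.
Qed.

Unset Implicit Arguments.

Theorem corollary4p6 (n : nat) (n_pos : 0 < n) (n_even : ~~ odd n) :
  forall (f : graph n -> bool) (t : dtree (edge_idx n)),
    extends_1v2Cycle f -> computes t f -> n ^ 2 <= 512 * dt_depth t.
Proof.
move=> f t [f_one f_two] t_f; rewrite leqNgt; apply/negP => shallow.
have [x1 [x2 [one1 two2 same]]] :
    exists x1 x2, [/\ one_cycle x1, two_cycles x2 & dt_eval t x1 = dt_eval t x2].
  case: t {t_f} shallow => [b _ | e t0 t1 shallow].
    by have [x1 [x2 [one1 two2]]] := one_and_two_cycles n_even; exists x1, x2.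
  have n_big : 24 <= n.
    have : 23 <= n by move: shallow => /=; nia.
    by rewrite leq_eqVlt => /orP [/eqP n23|//]; rewrite -n23 in n_even.
  have completed ps A q : adv_inv (Ordinal n_pos) (n %/ 16) ps A q ->
      q <= dt_depth (Node e t0 t1) -> exists x1 x2, [/\ consistent ps A x1,
        consistent ps A x2, one_cycle x1 & two_cycles x2].
    move=> inv q_le; apply: completion inv n_big n_even erefl _.
    by apply: leq_ltn_trans shallow; rewrite leq_mul2l q_le.
  have [x1 [x2 [_ _ one1 two2 same]]] := adversary completed (adv_inv_init _ _) (leqnn _).
  by exists x1, x2.
by move: same; rewrite !t_f f_one // f_two.
Qed.
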